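(* Let $x$ be a sequence of length $n$ and $i,j\in\{1,\ldots,n-1\}$ with $i\ne j$. Then $\tau(x,i)\not\approx_{CT}\tau(x,j)$.
   Context: Sequences are finite sequences of pairwise distinct integers indexed from $1$. For $1\le i\le n-1$, $\tau(x,i)$ is obtained from $x$ by exchanging $x[i]$ and $x[i+1]$. The Cartesian tree $C(x)$ of a sequence $x$ of length $n$ is empty if $n=0$; otherwise, if $x[i]$ is the minimum of $x$, it is the binary tree with root $i$, left subtree $C(x[1\ldots i-1])$ and right subtree $C(x[i+1\ldots n])$. $x\approx_{CT} y$ means $C(x)=C(y)$. *)

From mathcomp Require Import all_boot all_order all_algebra.
Set Implicit Arguments. Unset Strict Implicit. Unset Printing Implicit Defensive.
Import Order.TTheory GRing.Theory Num.Theory.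

(* Sequences of integers are [seq int]; the paper's 1-based index k
   corresponds to the 0-based position k-1 (nth 0 x (k-1)). *)

Inductive btree : Type :=
  | Leaf : btree
  | Node : btree -> nat -> btree -> btree.

Definition seqmin (h : int) (t : seq int) : int :=
  foldr (fun a b => if (a < b)%R then a else b) h t.

(* Cartesian tree, by recursion with fuel (fuel = size x suffices). If the
   minimum of x is x[k] (1-based k), the tree is Node (C(x[1..k-1])) k
   (C(x[k+1..n])). *)
Fixpoint ctree_aux (fuel : nat) (x : seq int) : btree :=
  match fuel with
  | 0 => Leaf
  | f.+1 =>
      match x with
      | [::] => Leaf
      | h :: t =>
          let k := index (seqmin h t) x in  (* 0-based position *)
          Node (ctree_aux f (take k x)) k.+1 (ctree_aux f (drop k.+1 x))
      end
  end.

Definition cartesian_tree (x : seq int) : btree := ctree_aux (size x) x.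

Definition ct_equiv (x y : seq int) : Prop := cartesian_tree x = cartesian_tree y.

(* tau x i : exchange x[i] and x[i+1] (1-based), i.e. 0-based positions
   i-1 and i. *)
Definition tau (x : seq int) (i : nat) : seq int :=
  set_nth 0%R (set_nth 0%R x i.-1 (nth 0%R x i)) i (nth 0%R x i.-1).

From mathcomp Require Import all_boot all_order all_algebra zify.
Set Implicit Arguments.
Unset Strict Implicit.
Unset Printing Implicit Defensive.

Import Order.TTheory GRing.Theory Num.Theory.

(* The Cartesian tree of x determines its ascent pattern, i.e. the set of k
   with x[k] <= x[k+1]: if the minimum sits at position m, there is a descent
   just before m and an ascent just after it, and the two subtrees determine
   the pattern on either side.  For distinct entries, tau(x, i) reverses the
   comparison between positions i and i+1.  If j >= i + 2, tau(x, j) leaves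
   that comparison unchanged, so the patterns differ at i.  If j = i + 1,
   writing a, b, c for x[i], x[i+1], x[i+2], the two sequences read b a c and
   a c b there, and equal patterns would give (b <= a) = (a <= c) = (c <= b),
   which is impossible when a != c. *)

(* Only meaningful for [k.+1 < size x]: past the end [nth] returns 0. *)
Definition ascent (x : seq int) (k : nat) : bool :=
  (nth 0%R x k <= nth 0%R x k.+1)%R.

Lemma ascent_cons h x k : ascent (h :: x) k.+1 = ascent x k.
Proof. by []. Qed.

Lemma ascent_take n x k : k.+1 < n -> ascent (take n x) k = ascent x k.
Proof. by move=> lt_k1n; rewrite /ascent !nth_take // ltnW. Qed.

Lemma ascent_drop n x k : ascent (drop n x) k = ascent x (n + k).
Proof. by rewrite /ascent !nth_drop addnS. Qed.

Lemma seqmin_cons h a t : seqmin h (a :: t) = Order.min a (seqmin h t).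
Proof. by []. Qed.

Lemma seqmin_mem h t : seqmin h t \in h :: t.
Proof.
elim: t => [|a t IHt]; first exact: mem_head.
rewrite seqmin_cons !inE; case: leP => _; first by rewrite eqxx orbT.
by move: IHt; rewrite inE => /orP[] ->; rewrite ?orbT.
Qed.

Lemma seqmin_min h t z : z \in h :: t -> (seqmin h t <= z)%R.
Proof.
elim: t z => [|a t IHt] z; first by rewrite inE => /eqP ->.
rewrite seqmin_cons ge_min !inE => /or3P[/eqP->|/eqP->|z_t].
- by rewrite IHt ?mem_head ?orbT.
- by rewrite lexx.
- by rewrite IHt ?orbT // inE z_t orbT.
Qed.

Section ArgMin.

Variables (h : int) (t : seq int).
Let x := h :: t.
Let m := index (seqmin h t) x.

Lemma index_seqmin_lt_size : m < size x.
Proof. by rewrite index_mem seqmin_mem. Qed.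

Lemma nth_index_seqmin : nth 0%R x m = seqmin h t.
Proof. exact/nth_index/seqmin_mem. Qed.

Lemma seqmin_lt_nth_before k : k < m -> (seqmin h t < nth 0%R x k)%R.
Proof.
move=> lt_km; have k_lt_size := ltn_trans lt_km index_seqmin_lt_size.
rewrite lt_def seqmin_min ?mem_nth // andbT.
exact/negbT/(before_find 0%R lt_km).
Qed.

Lemma descent_before_seqmin k : k.+1 = m -> ascent x k = false.
Proof.
move=> def_m; rewrite /ascent def_m nth_index_seqmin.
by apply/negbTE; rewrite -ltNge seqmin_lt_nth_before // -def_m.
Qed.

Lemma ascent_at_seqmin : m.+1 < size x -> ascent x m.
Proof.
by move=> lt_m1; rewrite /ascent nth_index_seqmin seqmin_min ?mem_nth.
Qed.

End ArgMin.

Lemma ctree_aux_cons f h t (m := index (seqmin h t) (h :: t)) :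
  ctree_aux f.+1 (h :: t) =
  Node (ctree_aux f (take m (h :: t))) m.+1 (ctree_aux f (drop m.+1 (h :: t))).
Proof. by []. Qed.

Lemma ctree_aux_fuel f g x :
  size x <= f -> size x <= g -> ctree_aux f x = ctree_aux g x.
Proof.
elim: f g x => [|f IHf] [|g] [|h t] // le_tf le_tg.
have {le_tf le_tg} [le_tf le_tg] : size t <= f /\ size t <= g by [].
rewrite !ctree_aux_cons; set m := index _ _.
have le_take : size (take m (h :: t)) <= size t.
  by move: (index_seqmin_lt_size h t); rewrite -/m size_take_min /=; lia.
have le_drop : size (drop m.+1 (h :: t)) <= size t.
  by rewrite size_drop /= subSS leq_subr.
by congr Node; apply: IHf; lia.
Qed.

Lemma ctree_aux_cartesian_tree f x :
  size x <= f -> ctree_aux f x = cartesian_tree x.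
Proof. by move=> le_xf; apply: ctree_aux_fuel. Qed.

Lemma ctree_aux_ascent f x y :
  size x <= f -> size y <= f -> ctree_aux f x = ctree_aux f y ->
  size x = size y /\ forall k, k.+1 < size x -> ascent x k = ascent y k.
Proof.
elim: f x y => [|f IHf] [|h t] [|h' t'] // le_xf le_yf.
have {le_xf le_yf} [le_tf le_tf'] : size t <= f /\ size t' <= f by [].
rewrite !ctree_aux_cons.
move: (index_seqmin_lt_size h t) (index_seqmin_lt_size h' t').
move: (@descent_before_seqmin h t) (@descent_before_seqmin h' t').
move: (@ascent_at_seqmin h t) (@ascent_at_seqmin h' t').
set m := index _ (h :: t); set m' := index _ (h' :: t'); clearbody m m'.
move=> asc_x asc_y desc_x desc_y lt_mx lt_my [eq_left eq_m eq_right].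
subst m'.
have [le_mt le_mt'] : m <= size t /\ m <= size t' by [].
have le_take (s : seq int) : size (take m s) <= f.
  by rewrite size_take_min (leq_trans (geq_minl _ _)) //; lia.
have le_drop (s : seq int) : size s <= f -> size (drop m s) <= f.
  by move=> le_sf; rewrite size_drop; lia.
have [_ asc_left] := IHf _ _ (le_take _) (le_take _) eq_left.
have [size_right asc_right] :=
  IHf _ _ (le_drop _ le_tf) (le_drop _ le_tf') eq_right.
have eq_size : size t = size t' by move: size_right; rewrite !size_drop; lia.
split; first by rewrite /= eq_size.
move=> k lt_k; case: (ltngtP k.+1 m) => [lt_k1m|le_mk|def_m].
- rewrite -[LHS](ascent_take _ lt_k1m) -[RHS](ascent_take _ lt_k1m).
  by rewrite asc_left // size_takel // ltnW.
- move: le_mk; rewrite ltnS leq_eqVlt => /orP[/eqP eq_mk|lt_mk].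
    by subst k; rewrite asc_x // asc_y //= -eq_size.
  have [k' def_k] : exists k', k = (m + k').+1 by exists (k - m.+1); lia.
  move: lt_k; rewrite def_k /= => lt_k.
  by rewrite !ascent_cons -!ascent_drop asc_right // size_drop; lia.
- by rewrite desc_x // desc_y.
Qed.

Lemma ct_equiv_ascent x y :
  ct_equiv x y ->
  size x = size y /\ forall k, k.+1 < size x -> ascent x k = ascent y k.
Proof.
move=> eq_ct; have le_xf := leq_maxl (size x) (size y).
have le_yf := leq_maxr (size x) (size y).
by apply: (ctree_aux_ascent le_xf le_yf); rewrite !ctree_aux_cartesian_tree.
Qed.

Section AdjacentComparisons.

Local Open Scope order_scope.
Context {d : Order.disp_t} {T : orderType d}.
Implicit Types a b c : T.

Lemma le_swap_neq a b : a != b -> (b <= a) != (a <= b).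
Proof. by case: ltgtP. Qed.

Lemma le_rot3_neq a b c :
  a != c -> (b <= a) = (a <= c) -> (a <= c) != (c <= b).
Proof.
move=> neq_ac; case: (leP a c) => [le_ac le_ba|lt_ca /negbT]; last first.
  by rewrite -ltNge => /(lt_trans lt_ca) /ltW ->.
apply/negP=> le_cb; move/negP: neq_ac; apply; apply/eqP.
by apply: le_anti; rewrite le_ac (le_trans le_cb) ?le_ba.
Qed.

End AdjacentComparisons.

Lemma size_tau x i : i < size x -> size (tau x i) = size x.
Proof. by move=> lt_i; rewrite /tau !size_set_nth; lia. Qed.

Lemma nth_tau x i k :
  nth 0%R (tau x i.+1) k =
  if k == i.+1 then nth 0%R x i
  else if k == i then nth 0%R x i.+1 else nth 0%R x k.
Proof. by rewrite /tau nth_set_nth /=; case: eqP; rewrite ?nth_set_nth. Qed.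

Lemma ascent_tau_swap x i :
  ascent (tau x i.+1) i = (nth 0%R x i.+1 <= nth 0%R x i)%R.
Proof. by rewrite /ascent !nth_tau eqxx (ltn_eqF (ltnSn i)) eqxx. Qed.

Lemma ascent_tau_lt x j k :
  k.+1 < j -> ascent (tau x j.+1) k = ascent x k.
Proof. by move=> lt_k1j; rewrite /ascent !nth_tau !ifN_eq //; lia. Qed.

Lemma ascent_tau_next x i :
  ascent (tau x i.+1) i.+1 = (nth 0%R x i <= nth 0%R x i.+2)%R.
Proof. by rewrite /ascent !nth_tau eqxx !ifN_eq //; lia. Qed.

Lemma ascent_tau_prev x i :
  ascent (tau x i.+2) i = (nth 0%R x i <= nth 0%R x i.+2)%R.
Proof. by rewrite /ascent !nth_tau eqxx !ifN_eq //; lia. Qed.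

Theorem lemma6 (x : seq int) (i j : nat) :
  uniq x ->
  1 <= i <= (size x).-1 ->
  1 <= j <= (size x).-1 ->
  i != j ->
  ~ ct_equiv (tau x i) (tau x j).
Proof.
move=> uniq_x; wlog lt_ij : i j / i < j => [sym range_i range_j neq_ij|].
  case: (ltngtP i j) => [lt_ij|lt_ji|eq_ij]; first exact: sym.
    by move=> /esym; apply: sym; rewrite // eq_sym.
  by rewrite eq_ij eqxx in neq_ij.
case: i j lt_ij => [|i] [|j] // lt_ij /andP[_ le_i] /andP[_ le_j] _.
move=> /ct_equiv_ascent[_ asc].
have [lt_ix lt_jx] : i.+1 < size x /\ j.+1 < size x by lia.
have {}asc k : k.+1 < size x -> ascent (tau x i.+1) k = ascent (tau x j.+1) k.
  by move=> lt_k; apply: asc; rewrite size_tau.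
have neq_nth k l :
    k < size x -> l < size x -> k != l -> nth 0%R x k != nth 0%R x l.
  by move=> lt_k lt_l; rewrite nth_uniq.
have := asc i lt_ix; rewrite ascent_tau_swap.
case: (ltngtP j i.+1) => [|lt_i1j|eq_j]; first lia.
  rewrite ascent_tau_lt // /ascent => eq_i.
  have neq_i_i1 : nth 0%R x i != nth 0%R x i.+1 by apply: neq_nth; lia.
  by have /negP[] := le_swap_neq neq_i_i1; rewrite eq_i.
subst j; rewrite ascent_tau_prev => eq_i.
have := asc i.+1 lt_jx; rewrite ascent_tau_next ascent_tau_swap => eq_i1.
have neq_i_i2 : nth 0%R x i != nth 0%R x i.+2 by apply: neq_nth; lia.
by have /negP[] := le_rot3_neq neq_i_i2 eq_i; rewrite eq_i1.
Qed.
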